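(* Let $n\ge 2$ and let $f$ be the $n$-ary operation on $\mathbb{Z}_8$ given by $f=2x_1\cdots x_n\left(\sum_{i=1}^n a_ix_i^2+\sum_{i=1}^n b_ix_i+c\right)$ with $a_i,b_i\in\{0,1\}$ and $c\in\{0,1,2,3\}$. Then $\sum_{i=1}^na_i+\sum_{i=1}^nb_i+c$ is even if and only if $f$ preserves the relation $$M=\{\mathbf{u}\in Z\mid a_{\{1,3\}}\equiv 0\pmod 4\},$$ where $a_{\{1,3\}}$ is the coefficient of $\mathbf{g}^{\{1,3\}}$ in the unique expression $\mathbf{u}=\sum_{A\in P_4}a_A\mathbf{g}^A$.
   Context: $P_4$ is the power set of $\{1,2,3,4\}$. For $A\in P_4$, $\mathbf{g}^A\in\mathbb{Z}_8^{P_4}$ is the tuple with $B$-component $1$ if $A\subseteq B$ and $0$ otherwise. Every $\mathbf{u}\in\mathbb{Z}_8^{P_4}$ has a unique expression $\mathbf{u}=\sum_{A\in P_4}a_A\mathbf{g}^A$ with $a_A\in\mathbb{Z}_8$. $Z\subseteq \mathbb{Z}_8^{P_4}$ consists of all $\mathbf{u}$ whose coefficients satisfy: (Z1) $a_{\{2\}}\equiv 2a_{\{1\}}\pmod 4$ and $a_{\{4\}}\equiv 2a_{\{3\}}\pmod 4$; (Z2) $a_A\equiv 0\pmod 2$ whenever $|A|\ge 2$; (Z3) $a_A\equiv 0\pmod 4$ whenever $|A|\ge 2$ and $A\cap\{2,4\}\neq\emptyset$; (Z4) $a_A=0$ whenever $\{2,4\}\subseteq A$. An operation preserves a relation if applying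 it componentwise to elements of the relation yields an element of the relation. *)

From mathcomp Require Import all_boot all_order all_algebra.
Set Implicit Arguments. Unset Strict Implicit. Unset Printing Implicit Defensive.
Import GRing.Theory.
Local Open Scope ring_scope.

(* Elements 1,2,3,4 of {1,2,3,4} are represented by 0,1,2,3 : 'I_4. *)
Definition e1 : 'I_4 := @Ordinal 4 0 isT.
Definition e2 : 'I_4 := @Ordinal 4 1 isT.
Definition e3 : 'I_4 := @Ordinal 4 2 isT.
Definition e4 : 'I_4 := @Ordinal 4 3 isT.

Definition tup := {ffun {set 'I_4} -> 'Z_8}.

Definition gvec (A : {set 'I_4}) : tup := [ffun B : {set 'I_4} => ((A \subset B) : nat)%:R].

Definition expand (a : {ffun {set 'I_4} -> 'Z_8}) : tup :=
  [ffun B : {set 'I_4} => \sum_(A : {set 'I_4}) a A * gvec A B].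

(* congruence modulo 4 of elements of Z_8 (well defined since 4 | 8) *)
Definition cong4 (x y : 'Z_8) : Prop := (val x %% 4 = val y %% 4)%N.

Definition Zcoeffs (a : {ffun {set 'I_4} -> 'Z_8}) : Prop :=
  cong4 (a [set e2]) (2 * a [set e1]) /\ cong4 (a [set e4]) (2 * a [set e3]) /\
  (forall A : {set 'I_4}, (2 <= #|A|)%N -> (2 %| val (a A))%N) /\
  (forall A : {set 'I_4}, (2 <= #|A|)%N -> A :&: [set e2; e4] != set0 ->
      cong4 (a A) 0) /\
  (forall A : {set 'I_4}, [set e2; e4] \subset A -> a A = 0).

Definition inZ (u : tup) : Prop :=
  exists a, u = expand a /\ Zcoeffs a.

Definition inM (u : tup) : Prop :=
  exists a, u = expand a /\ Zcoeffs a /\ cong4 (a [set e1; e3]) 0.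

Definition fop (n : nat) (a b : 'I_n -> bool) (c : nat) (x : 'I_n -> 'Z_8) : 'Z_8 :=
  2 * (\prod_(i < n) x i) *
  (\sum_(i < n) (a i : nat)%:R * x i ^+ 2 + \sum_(i < n) (b i : nat)%:R * x i + c%:R).

Definition preserves (n : nat) (f : ('I_n -> 'Z_8) -> 'Z_8) (R : tup -> Prop) : Prop :=
  forall u : 'I_n -> tup, (forall i, R (u i)) ->
    R [ffun B : {set 'I_4} => f (fun i => u i B)].

(* Tuples are read through their coefficients by Moebius inversion on the
   Boolean lattice.  For u in M and C avoiding 2 and 4, the values
   (u C, u (C+2), u (C+4), u (C+{2,4})) lie in the subring of Z_8^4 given by
   z1 = y, z2 = y (mod 2) and z3 - z1 - z2 + y = 0 (mod 4): the coefficients of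
   the sets containing 2 or 4 are even, and those of the sets containing both
   vanish.  As f = 2 phi with phi an integer polynomial, phi preserves this
   subring.  If the parity is even, 4 phi = 0, so w = f(u_1, ..., u_n) satisfies
   2 w = 0 and has a vanishing mixed difference in the directions 2 and 4;
   hence all its coefficients lie in {0, 4} and vanish above {2,4}: w is in M.
   If the parity is odd, take g^{3} + 2 g^{4} as one argument and
   g^{1} + 2 g^{2} as the others: w vanishes on the proper subsets of {1,3},
   so its {1,3}-coefficient is w {1,3} = f(1, ..., 1) = 2 (mod 4). *)

From HB Require Import structures.
From mathcomp Require Import all_boot all_order all_algebra ring.
Set Implicit Arguments. Unset Strict Implicit. Unset Printing Implicit Defensive.
Import GRing.Theory.
Local Open Scope ring_scope.

Section Moebius.
Variables (T : finType) (R : comPzRingType).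
Implicit Types (a w : {set T} -> R) (A B C : {set T}).

Lemma prod_natr_forall (P : pred T) :
  \prod_i (P i : nat)%:R = ([forall i, P i] : nat)%:R :> R.
Proof.
have [/forallP allP | /forallPn[i /negbTE Pi]] := boolP [forall i, P i].
  by rewrite big1 // => i _; rewrite allP.
by rewrite (bigD1 i) //= Pi mul0r.
Qed.

Lemma subset_prod A B : (A \subset B)%:R = \prod_i ((i \in A) ==> (i \in B) : nat)%:R :> R.
Proof. by rewrite prod_natr_forall; congr (nat_of_bool _)%:R; apply/subsetP/forall_inP. Qed.

Lemma eqset_prod A B : (A == B)%:R = \prod_i ((i \in A) == (i \in B) : nat)%:R :> R.
Proof.
rewrite prod_natr_forall; congr (nat_of_bool _)%:R.
by apply/eqP/forallP => [-> // | eqAB]; apply/setP => i; apply/eqP.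
Qed.

(* The zeta and Moebius kernels of the Boolean lattice are tensor powers of the
   mutually inverse matrices [[1, 1], [0, 1]] and [[1, -1], [0, 1]]. *)
Lemma sum_prod_bits (f g : bool -> bool -> R) :
  (forall x z, f x true * g true z + f x false * g false z = (x == z : nat)%:R) ->
  forall C B, \sum_(A : {set T}) (\prod_i f (i \in C) (i \in A)) * \prod_i g (i \in A) (i \in B)
              = (C == B)%:R.
Proof.
move=> fg C B; rewrite eqset_prod.
under eq_bigr do rewrite -fg.
rewrite bigA_distr; apply: eq_bigr => A _; rewrite -big_split /=.
by apply: eq_bigr => i _; case: (i \in A).
Qed.

Definition zeta a : {ffun {set T} -> R} :=
  [ffun B : {set T} => \sum_(A : {set T}) a A * (A \subset B)%:R].

Definition moebius_coef C A : R :=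
  \prod_i (if i \in C then (i \in A)%:R else if i \in A then -1 else 1).

Definition moebius w : {ffun {set T} -> R} :=
  [ffun A : {set T} => \sum_(C : {set T}) w C * moebius_coef C A].

Lemma moebius_zeta_kernel C B :
  \sum_(A : {set T}) moebius_coef C A * (A \subset B)%:R = (C == B)%:R.
Proof.
under eq_bigr do rewrite subset_prod.
apply: (sum_prod_bits (f := fun x y => if x then y%:R else if y then -1 else 1)
                      (g := fun x y => (x ==> y : nat)%:R)).
by move=> [] [] /=; ring.
Qed.

Lemma zeta_moebius_kernel C B :
  \sum_(A : {set T}) (C \subset A)%:R * moebius_coef A B = (C == B)%:R.
Proof.
under eq_bigr do rewrite subset_prod.
apply: (sum_prod_bits (f := fun x y => (x ==> y : nat)%:R)
                      (g := fun x y => if x then y%:R else if y then -1 else 1)).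
by move=> [] [] /=; ring.
Qed.

Lemma sum_mul_eqset w B : \sum_(C : {set T}) w C * (C == B)%:R = w B.
Proof. by rewrite (bigD1 B) //= eqxx mulr1 big1 ?addr0 // => C /negbTE->; rewrite mulr0. Qed.

Lemma moebiusK w B : zeta (moebius w) B = w B.
Proof.
rewrite ffunE; under eq_bigr do rewrite ffunE mulr_suml.
rewrite exchange_big /= -(sum_mul_eqset w); apply: eq_bigr => C _.
by rewrite -moebius_zeta_kernel mulr_sumr; apply: eq_bigr => A _; rewrite mulrA.
Qed.

Lemma zetaK a A : moebius (zeta a) A = a A.
Proof.
rewrite ffunE; under eq_bigr do rewrite ffunE mulr_suml.
rewrite exchange_big /= -(sum_mul_eqset a); apply: eq_bigr => C _.
by rewrite -zeta_moebius_kernel mulr_sumr; apply: eq_bigr => B _; rewrite mulrA.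
Qed.

Lemma moebius_coef_id A : moebius_coef A A = 1.
Proof. by rewrite /moebius_coef big1 // => i _; case: (i \in A). Qed.

Lemma moebius_coef_eq0 C A : ~~ (C \subset A) -> moebius_coef C A = 0.
Proof. by case/subsetPn=> i iC /negbTE iA; rewrite /moebius_coef (bigD1 i) //= iC iA mul0r. Qed.

Lemma moebius_coef_setU1 x C A :
  x \in A -> x \notin C -> moebius_coef (x |: C) A = - moebius_coef C A.
Proof.
move=> xA /negbTE xC; rewrite /moebius_coef (bigD1 x) // [in RHS](bigD1 x) //.
rewrite setU11 xA xC /= mulN1r opprK mul1r.
by apply: eq_bigr => i /negbTE ix; rewrite in_setU1 ix.
Qed.

Lemma moebius_vanishing_below w A : (forall C, C \proper A -> w C = 0) -> moebius w A = w A.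
Proof.
move=> w0; rewrite ffunE (bigD1 A) //= moebius_coef_id mulr1 big1 ?addr0 // => C neCA.
have [CA | nCA] := boolP (C \subset A); last by rewrite moebius_coef_eq0 ?mulr0.
by rewrite w0 ?mul0r // properEneq neCA.
Qed.

Lemma sum_setU1 x (F : {set T} -> R) :
  \sum_(C : {set T}) F C = \sum_(C : {set T} | x \notin C) (F C + F (x |: C)).
Proof.
rewrite (bigID (fun C => x \in C)) /= addrC big_split /=; congr (_ + _).
rewrite (reindex_onto (fun C => x |: C) (fun C => C :\ x)) /= => [|C xC]; last exact: setD1K.
apply: eq_bigl => C; rewrite setU11 /=.
by apply/eqP/idP => [<- | /setU1K //]; rewrite setD11.
Qed.

Lemma moebius_mixed_eq0 w x y A : x != y -> x \in A -> y \in A ->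
  (forall C, x \notin C -> y \notin C ->
     w (x |: (y |: C)) - w (x |: C) - w (y |: C) + w C = 0) ->
  moebius w A = 0.
Proof.
move=> nxy xA yA dw; rewrite ffunE (sum_setU1 y) big_mkcond (sum_setU1 x) /=.
apply: big1 => C xC; have yxC : (y \in x |: C) = (y \in C).
  by rewrite in_setU1 eq_sym (negbTE nxy).
rewrite yxC; have [yC | yC] := boolP (y \in C); first by rewrite addr0.
rewrite !moebius_coef_setU1 ?yxC // setUCA /=.
transitivity (moebius_coef C A * (w (x |: (y |: C)) - w (x |: C) - w (y |: C) + w C)).
  by ring.
by rewrite dw // mulr0.
Qed.

Lemma subsetU1_notin x A C : x \notin A -> (A \subset x |: C) = (A \subset C).
Proof.
move=> xA; apply/subsetP/subsetP => subAC i iA; last by rewrite in_setU1 subAC ?orbT.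
by move: (subAC i iA); rewrite in_setU1 => /predU1P[ix | //]; move: xA; rewrite -ix iA.
Qed.

Lemma zeta_setU1 a x C : x \notin C ->
  zeta a (x |: C) - zeta a C = zeta (fun A => if x \in A then a A else 0) (x |: C).
Proof.
move=> xC; rewrite !ffunE -sumrB; apply: eq_bigr => A _.
have [xA | xA] := ifPn; last by rewrite subsetU1_notin // subrr mul0r.
suff /negbTE-> : ~~ (A \subset C) by rewrite mulr0 subr0.
by apply: contraNN xC => /subsetP; apply.
Qed.

Lemma zeta_setU1_setU1 a x y C : x != y -> x \notin C -> y \notin C ->
  zeta a (x |: (y |: C)) - zeta a (x |: C) - zeta a (y |: C) + zeta a C =
  zeta (fun A => if y \in A then if x \in A then a A else 0 else 0) (y |: (x |: C)).
Proof.
move=> nxy xC yC.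
have xyC : x \notin y |: C by rewrite in_setU1 (negbTE nxy).
have yxC : y \notin x |: C by rewrite in_setU1 eq_sym (negbTE nxy).
rewrite -zeta_setU1 // [y |: (x |: C)]setUCA -(zeta_setU1 a xyC) -(zeta_setU1 a xC).
by ring.
Qed.

End Moebius.

Lemma natr_Z8_eq0 (k : nat) : (k%:R == 0 :> 'Z_8) = (8 %| k)%N.
Proof. by rewrite -val_eqE /= (val_Zp_nat (p := 8)). Qed.

Lemma mul4_natr_eq0 (k : nat) : (4 * k%:R == 0 :> 'Z_8) = ~~ odd k.
Proof. by rewrite -natrM natr_Z8_eq0 -[8%N]/(4 * 2)%N dvdn_pmul2l // dvdn2. Qed.

Lemma mul4_eq0 (x : 'Z_8) : (4 * x == 0) = (2 %| val x)%N.
Proof. by rewrite -[x in LHS]natr_Zp mul4_natr_eq0 dvdn2. Qed.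

Lemma Z8_char : (8 : 'Z_8) = 0. Proof. exact: pchar_Zp. Qed.

Lemma mul4E (x : 'Z_8) : 4 * x = 2 * (2 * x).
Proof. by rewrite mulrA -natrM. Qed.

Lemma mul4_sqr (x : 'Z_8) : 4 * x ^+ 2 = 4 * x.
Proof.
have ev : 4 * (x * (x + 1)) = 0.
  by apply/eqP; rewrite -[x]natr_Zp natr1 -natrM mul4_natr_eq0 oddM oddS andbN.
apply/eqP; rewrite -subr_eq0.
have -> : 4 * x ^+ 2 - 4 * x = 4 * (x * (x + 1)) - 8 * x by ring.
by rewrite ev Z8_char mul0r subrr.
Qed.

Lemma mul_even_eq0 (x y : 'Z_8) : 4 * x = 0 -> 4 * y = 0 -> 2 * (x * y) = 0.
Proof.
move=> /eqP; rewrite mul4_eq0 => ex /eqP; rewrite mul4_eq0 => ey.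
apply/eqP; rewrite -[x]natr_Zp -[y]natr_Zp -!natrM natr_Z8_eq0.
by rewrite -[8%N]/(2 * (2 * 2))%N dvdn_pmul2l // dvdn_mul.
Qed.

Lemma cong4E (x y : 'Z_8) : cong4 x y <-> 2 * x = 2 * y.
Proof.
have val2 (z : 'Z_8) : val (2 * z) = (2 * (val z %% 4))%N.
  by rewrite -[z in LHS]natr_Zp -natrM /= (val_Zp_nat (p := 8)) // -[8%N]/(2 * 4)%N muln_modr.
rewrite /cong4; split=> [h | /(congr1 val)]; first by apply: val_inj; rewrite !val2 h.
by rewrite !val2 => /eqP; rewrite eqn_pmul2l // => /eqP.
Qed.

(* (y, z1, z2, z3) stands for the values of a tuple at C, C + 2, C + 4 and
   C + {2,4}. *)
Definition square (q : 'Z_8 * 'Z_8 * 'Z_8 * 'Z_8) : bool :=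
  let: (y, z1, z2, z3) := q in
  [&& 4 * (z1 - y) == 0, 4 * (z2 - y) == 0 & 2 * (z3 - z1 - z2 + y) == 0].

Fact square_subring : subring_closed square.
Proof.
split; first by rewrite unfold_in /= subrr sub0r addNr mulr0.
all: move=> [[[y z1] z2] z3] [[[y' z1'] z2'] z3']; rewrite !unfold_in /=.
all: move=> /and3P[/eqP a1 /eqP a2 /eqP a3] /and3P[/eqP b1 /eqP b2 /eqP b3].
all: apply/and3P; split; apply/eqP.
- have -> : 4 * (z1 - z1' - (y - y')) = 4 * (z1 - y) - 4 * (z1' - y') by ring.
  by rewrite a1 b1 subrr.
- have -> : 4 * (z2 - z2' - (y - y')) = 4 * (z2 - y) - 4 * (z2' - y') by ring.
  by rewrite a2 b2 subrr.
- have -> : 2 * (z3 - z3' - (z1 - z1') - (z2 - z2') + (y - y')) =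
    2 * (z3 - z1 - z2 + y) - 2 * (z3' - z1' - z2' + y') by ring.
  by rewrite a3 b3 subrr.
- have -> : 4 * (z1 * z1' - y * y') = 4 * (z1 - y) * z1' + y * (4 * (z1' - y')) by ring.
  by rewrite a1 b1 mul0r mulr0 addr0.
- have -> : 4 * (z2 * z2' - y * y') = 4 * (z2 - y) * z2' + y * (4 * (z2' - y')) by ring.
  by rewrite a2 b2 mul0r mulr0 addr0.
- (* every summand has a factor 2 d, 2 d' or twice a product of two even elements *)
  pose d := z3 - z1 - z2 + y; pose d' := z3' - z1' - z2' + y'.
  have -> : 2 * (z3 * z3' - z1 * z1' - z2 * z2' + y * y') =
    y * (2 * d') + y' * (2 * d) + 2 * ((z1 - y) * (z2' - y')) + 2 * ((z2 - y) * (z1' - y'))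
    + (z1 - y + (z2 - y)) * (2 * d') + 2 * d * (z1' - y' + (z2' - y') + d') by rewrite /d /d'; ring.
  by rewrite a3 b3 (mul_even_eq0 a1 b2) (mul_even_eq0 a2 b1) !mulr0 !mul0r !addr0.
Qed.
HB.instance Definition _ := GRing.isSubringClosed.Build _ square square_subring.

Definition phi (R : comPzRingType) n (a b : 'I_n -> bool) (c : nat) (x : 'I_n -> R) : R :=
  (\prod_(i < n) x i) *
  (\sum_(i < n) (a i : nat)%:R * x i ^+ 2 + \sum_(i < n) (b i : nat)%:R * x i + c%:R).

Lemma rpred_phi (R : comPzRingType) (S : subringClosed R) n a b c (x : 'I_n -> R) :
  (forall i, x i \in S) -> phi a b c x \in S.
Proof.
move=> Sx; rewrite rpredM ?rpredD ?rpred_nat ?rpred_prod //;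
  by apply: rpred_sum => i _; rewrite rpredM ?rpred_nat ?rpredX.
Qed.

Lemma rmorph_phi (R R' : comPzRingType) (f : {rmorphism R -> R'}) n a b c (x : 'I_n -> R) :
  f (phi a b c x) = phi a b c (fun i => f (x i)).
Proof.
rewrite rmorphM rmorph_prod !rmorphD !rmorph_sum rmorph_nat.
by congr (_ * (_ + _ + _)); apply: eq_bigr => i _; rewrite rmorphM rmorph_nat ?rmorphXn.
Qed.

Lemma phi_square n a b c (q : 'I_n -> 'Z_8 * 'Z_8 * 'Z_8 * 'Z_8) :
  (forall i, q i \in square) ->
  (phi a b c (fun i => (q i).1.1.1), phi a b c (fun i => (q i).1.1.2),
   phi a b c (fun i => (q i).1.2), phi a b c (fun i => (q i).2)) \in square.
Proof.
move=> /(rpred_phi a b c); rewrite -!rmorph_phi.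
by case: (phi a b c q) => [[[? ?] ?] ?].
Qed.

Lemma fopE n (a b : 'I_n -> bool) c x : fop a b c x = 2 * phi a b c x.
Proof. by rewrite /fop mulrA. Qed.

Lemma mul4_phi n (a b : 'I_n -> bool) c (x : 'I_n -> 'Z_8) :
  ~~ odd (\sum_(i < n) a i + \sum_(i < n) b i + c)%N -> 4 * phi a b c x = 0.
Proof.
set P := \prod_(i < n) x i => even_abc.
have mul4P i : 4 * P * x i = 4 * P.
  rewrite /P (bigD1 i) //=; set P' := \prod_(j | _) _.
  have -> : 4 * (x i * P') * x i = 4 * x i ^+ 2 * P' by ring.
  by rewrite mul4_sqr mulrA.
have mul4P2 i : 4 * P * x i ^+ 2 = 4 * P by rewrite expr2 mulrA !mul4P.
rewrite /phi -/P mulrA !mulrDr !mulr_sumr.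
under eq_bigr do rewrite mulrCA mul4P2.
under [X in _ + X + _]eq_bigr do rewrite mulrCA mul4P.
rewrite -!mulr_suml -!natr_sum.
transitivity (P * (4 * (\sum_(i < n) a i + \sum_(i < n) b i + c)%N%:R)).
  by rewrite !natrD; ring.
by move: even_abc; rewrite -mul4_natr_eq0 => /eqP->; rewrite mulr0.
Qed.

Lemma fop_eq0 n (a b : 'I_n -> bool) c (x : 'I_n -> 'Z_8) j : x j = 0 -> fop a b c x = 0.
Proof. by move=> xj; rewrite /fop (bigD1 j) //= xj mul0r mulr0 mul0r. Qed.

Lemma fop_all1 n (a b : 'I_n -> bool) c (x : 'I_n -> 'Z_8) : (forall i, x i = 1) ->
  fop a b c x = 2 * (\sum_(i < n) a i + \sum_(i < n) b i + c)%N%:R.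
Proof.
move=> x1; rewrite /fop big1 // mulr1 !natrD !natr_sum.
by congr (2 * (_ + _ + _)); apply: eq_bigr => i _; rewrite x1 ?expr1n mulr1.
Qed.

Lemma expandE (a : {ffun {set 'I_4} -> 'Z_8}) : expand a = zeta a.
Proof. by apply/ffunP => B; rewrite !ffunE; apply: eq_bigr => A _; rewrite ffunE. Qed.

Lemma mul4_eq0_cong4 (x y : 'Z_8) : cong4 x (2 * y) -> 4 * x = 0.
Proof.
move/cong4E => x2y; by rewrite mul4E x2y !mulrA -!natrM Z8_char mul0r.
Qed.

Lemma Zcoeffs_mul4_eq0 (a : {ffun {set 'I_4} -> 'Z_8}) (A : {set 'I_4}) :
  Zcoeffs a -> (e2 \in A) || (e4 \in A) -> 4 * a A = 0.
Proof.
case=> Z12 [Z34 [_ [Z3 _]]] e24A.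
have [A_ge2 | A_le1] := leqP 2 #|A|.
  have /cong4E : cong4 (a A) 0.
    apply: Z3 => //; apply/set0Pn.
    by case/orP: e24A => xA; [exists e2 | exists e4]; rewrite inE xA !inE eqxx ?orbT.
  by rewrite mulr0 mul4E => ->; rewrite mulr0.
have single x : x \in A -> A = [set x].
  by move=> xA; apply/esym/eqP; rewrite eqEcard sub1set xA cards1.
by case/orP: e24A => /single->; [exact: mul4_eq0_cong4 Z12 | exact: mul4_eq0_cong4 Z34].
Qed.

Lemma inM_square (u : tup) (C : {set 'I_4}) :
  inM u -> e2 \notin C -> e4 \notin C ->
  (u C, u (e2 |: C), u (e4 |: C), u (e2 |: (e4 |: C))) \in square.
Proof.
case=> a [-> [Za _]] e2C e4C; rewrite expandE.
have mul4_diff x : (x == e2) || (x == e4) -> x \notin C -> 4 * (zeta a (x |: C) - zeta a C) = 0.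
  move=> x24 xC; rewrite zeta_setU1 // ffunE mulr_sumr big1 // => A _.
  case: ifP => xA; last by rewrite mul0r mulr0.
  rewrite mulrA Zcoeffs_mul4_eq0 ?mul0r //.
  by case/orP: x24 => /eqP ex; rewrite -ex xA ?orbT.
have d2 := mul4_diff e2 isT e2C; have d4 := mul4_diff e4 isT e4C.
rewrite unfold_in /= d2 d4 /=.
apply/eqP; rewrite zeta_setU1_setU1 // ffunE mulr_sumr big1 // => A _.
case: ifP => e4A; last by rewrite mul0r mulr0.
case: ifP => e2A; last by rewrite mul0r mulr0.
by rewrite Za.2.2.2.2 ?mul0r ?mulr0 // subUset !sub1set e2A e4A.
Qed.

Lemma Zcoeffs_of_mul2_eq0 (a : {ffun {set 'I_4} -> 'Z_8}) :
  (forall A : {set 'I_4}, 2 * a A = 0) ->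
  (forall A : {set 'I_4}, [set e2; e4] \subset A -> a A = 0) ->
  Zcoeffs a /\ cong4 (a [set e1; e3]) 0.
Proof.
move=> a2 a24; have a0 A : cong4 (a A) 0 by apply/cong4E; rewrite a2 mulr0.
have a02 A B : cong4 (a A) (2 * a B) by apply/cong4E; rewrite a2 a2 mulr0.
split; last exact: a0.
split; first exact: a02; split; first exact: a02.
split; first by move=> A _; rewrite -mul4_eq0 mul4E a2 mulr0.
by split=> // A _ _; apply: a0.
Qed.

Lemma Zcoeffs_singletons (a : {ffun {set 'I_4} -> 'Z_8}) :
  (forall A : {set 'I_4}, (1 < #|A|)%N -> a A = 0) ->
  cong4 (a [set e2]) (2 * a [set e1]) -> cong4 (a [set e4]) (2 * a [set e3]) ->
  Zcoeffs a /\ cong4 (a [set e1; e3]) 0.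
Proof.
move=> a_small Z12 Z34; split; last by rewrite a_small // cards2.
do 2!split=> //; split; first by move=> A /a_small->.
split; first by move=> A /a_small->.
by move=> A /subset_leq_card; rewrite cards2 => /a_small.
Qed.

Definition witness (x y : 'I_4) : tup := [ffun C : {set 'I_4} => (x \in C)%:R + 2 * (y \in C)%:R].

Lemma witness_inM x y : (x, y) = (e1, e2) \/ (x, y) = (e3, e4) -> inM (witness x y).
Proof.
move=> xy; exists [ffun A : {set 'I_4} => (A == [set x])%:R + 2 * (A == [set y])%:R]; split.
  apply/ffunP => C; rewrite expandE !ffunE.
  rewrite (eq_bigr (fun A : {set 'I_4} => (A \subset C)%:R * (A == [set x])%:R +
                             2 * (A \subset C)%:R * (A == [set y])%:R)) => [|A _]; last first.
    by rewrite ffunE; ring.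
  rewrite big_split /= (sum_mul_eqset (fun A : {set 'I_4} => (A \subset C)%:R)).
  by rewrite (sum_mul_eqset (fun A : {set 'I_4} => 2 * (A \subset C)%:R)) !sub1set.
apply: Zcoeffs_singletons.
  move=> A A_gt1; have ne_set1 z : (A == [set z]) = false.
    by apply/negbTE; apply: contraTneq A_gt1 => ->; rewrite cards1.
  by rewrite ffunE !ne_set1 mulr0n mulr0 addr0.
all: by case: xy => -[-> ->]; rewrite !ffunE !(inj_eq set1_inj).
Qed.

Lemma witness_eq0 x y (C : {set 'I_4}) : x \notin C -> y \notin C -> witness x y C = 0.
Proof. by move=> /negbTE xC /negbTE yC; rewrite ffunE xC yC mulr0n mulr0 addr0. Qed.

Lemma fop_preserves_M n (a b : 'I_n -> bool) c :
  ~~ odd (\sum_(i < n) a i + \sum_(i < n) b i + c)%N -> preserves (fop a b c) inM.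
Proof.
move=> even_abc u uM; set w := [ffun B => _].
have w2 (B : {set 'I_4}) : 2 * w B = 0 by rewrite ffunE fopE mulrA -natrM mul4_phi.
have w_mixed (C : {set 'I_4}) : e2 \notin C -> e4 \notin C ->
    w (e2 |: (e4 |: C)) - w (e2 |: C) - w (e4 |: C) + w C = 0.
  move=> e2C e4C.
  have := phi_square a b c
    (q := fun i => (u i C, u i (e2 |: C), u i (e4 |: C), u i (e2 |: (e4 |: C))))
    (fun i => inM_square (uM i) e2C e4C).
  rewrite unfold_in /= => /and3P[_ _ /eqP sq].
  by rewrite !ffunE !fopE -[RHS]sq; ring.
exists (moebius w); split; first by apply/ffunP => B; rewrite expandE moebiusK.
apply: Zcoeffs_of_mul2_eq0 => A.
  by rewrite ffunE mulr_sumr big1 // => C _; rewrite mulrA w2 mul0r.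
by rewrite subUset !sub1set => /andP[e2A e4A]; apply: (moebius_mixed_eq0 (x := e2) (y := e4)).
Qed.

Lemma fop_not_preserves_M n (a b : 'I_n -> bool) c : (1 < n)%N ->
  odd (\sum_(i < n) a i + \sum_(i < n) b i + c)%N -> ~ preserves (fop a b c) inM.
Proof.
move=> n_gt1 odd_abc preserves_M.
pose i1 : 'I_n := Ordinal n_gt1; pose i0 : 'I_n := Ordinal (ltnW n_gt1).
pose u i := if i == i1 then witness e3 e4 else witness e1 e2.
have uM i : inM (u i) by rewrite /u; case: ifP => _; apply: witness_inM; [right | left].
have [a' [w_eq [_ a'13]]] := preserves_M u uM.
have coef13 : a' [set e1; e3] = fop a b c (fun i => u i [set e1; e3]).
  rewrite -zetaK -expandE -w_eq moebius_vanishing_below => [|C]; first by rewrite ffunE.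
  rewrite properE => /andP[C13 n13C]; rewrite ffunE.
  have notin x : x \notin [set e1; e3] -> x \notin C := contraNN (subsetP C13 x).
  have : (e1 \notin C) || (e3 \notin C).
    rewrite -negb_and; move: n13C; apply: contra => /andP[e1C e3C].
    by rewrite subUset !sub1set e1C e3C.
  case/orP => [e1C | e3C].
    by apply: (@fop_eq0 _ _ _ _ _ i0); rewrite /u /= witness_eq0 // notin // !inE.
  by apply: (@fop_eq0 _ _ _ _ _ i1); rewrite /u /= witness_eq0 // notin // !inE.
move: a'13; rewrite coef13 fop_all1 => [|i]; last first.
  by rewrite /u; case: ifP => _; rewrite ffunE !inE /= mulr0 addr0.
move/cong4E; rewrite mulr0 -mul4E => /eqP.
by rewrite mul4_natr_eq0 odd_abc.
Qed.

Theorem lemma3p9 (n : nat) (hn : (2 <= n)%N) (a b : 'I_n -> bool) (c : nat)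
  (hc : (c <= 3)%N) :
  ~~ odd (\sum_(i < n) (a i : nat) + \sum_(i < n) (b i : nat) + c)%N
  <-> preserves (fop a b c) inM.
Proof.
split; first exact: fop_preserves_M.
by move=> preserves_M; apply/negP => odd_abc; exact: fop_not_preserves_M hn odd_abc preserves_M.
Qed.
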